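(* Let $p$ be a prime, $a\in\mathbb{Q}_p$, and $f:\mathbb{Q}_p\to\mathbb{Q}_p$, $f(x)=x^3+ax^2$. Let $x^{(0)}\in\mathbb{Q}_p$ be a fixed point of $f$. If $x\in\mathbb{Q}_p$ satisfies $$\max\Big\{|3x^{(0)}+a|_p\,|x-x^{(0)}|_p,\ |x-x^{(0)}|_p^2\Big\}<|f'(x^{(0)})|_p,$$ then $$|f(x)-f(x^{(0)})|_p=|f'(x^{(0)})|_p\,|x-x^{(0)}|_p.$$
   Context: $\mathbb{Q}_p$ is the field of $p$-adic numbers with $p$-adic norm $|\cdot|_p$; $f'(x)=3x^2+2ax$ is the derivative of $f$. *)

From HB Require Import structures.
From mathcomp Require Import all_boot all_order all_algebra.
From mathcomp Require Import reals.
Set Implicit Arguments. Unset Strict Implicit. Unset Printing Implicit Defensive.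
Import Order.TTheory GRing.Theory Num.Theory.
Local Open Scope ring_scope.

(* (K, nrm) is (an isometric copy of) the field Q_p with |.|_p. *)
Definition is_Qp (p : nat) (K : fieldType) (R : realType) (nrm : K -> R) : Prop :=
  [/\ (forall x, 0 <= nrm x),
      (forall x, nrm x = 0 <-> x = 0),
      (forall x y, nrm (x * y) = nrm x * nrm y),
      (forall x y, nrm (x + y) <= Num.max (nrm x) (nrm y)) &
      nrm (p%:R) = (p%:R)^-1] /\
      (forall (x : K) (e : R), 0 < e -> exists q : rat, nrm (x - ratr q) < e) /\
      (forall u : nat -> K,
         (forall e : R, 0 < e -> exists N : nat,
            forall m n, (N <= m)%N -> (N <= n)%N -> nrm (u m - u n) < e) ->
         exists l : K, forall e : R, 0 < e -> exists N : nat,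
            forall n, (N <= n)%N -> nrm (u n - l) < e).

Definition fcub (K : fieldType) (a x : K) : K := x ^+ 3 + a * x ^+ 2.
Definition fcub' (K : fieldType) (a x : K) : K := 3 * x ^+ 2 + 2 * a * x.

(* Taylor expansion of the cubic at
   x0 gives f(x) - f(x0) = h (f'(x0) + (3 x0 + a) h + h^2) with h = x - x0, and
   by hypothesis both correction terms are strictly smaller in absolute value
   than f'(x0); for a non-archimedean absolute value the dominant term then
   determines the absolute value of the sum. *)
From HB Require Import structures.
From mathcomp Require Import all_boot all_order all_algebra.
From mathcomp Require Import reals.
From mathcomp Require Import ring lra.
Set Implicit Arguments.
Unset Strict Implicit.
Unset Printing Implicit Defensive.

Import Order.TTheory GRing.Theory Num.Theory.
Local Open Scope ring_scope.

Section NonArchimedeanAbsoluteValue.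

Variables (K : nzRingType) (R : realDomainType) (nrm : K -> R).
Hypothesis nrm_ge0 : forall x, 0 <= nrm x.
Hypothesis nrm_eq0 : forall x, nrm x = 0 <-> x = 0.
Hypothesis nrmM : forall x y, nrm (x * y) = nrm x * nrm y.
Hypothesis nrmD_max : forall x y, nrm (x + y) <= Num.max (nrm x) (nrm y).

Lemma nrm1 : nrm 1 = 1.
Proof.
have nrm1_neq0 : nrm 1 != 0 by apply/eqP => /nrm_eq0/eqP; rewrite oner_eq0.
by apply: (mulfI nrm1_neq0); rewrite -nrmM !mulr1.
Qed.

Lemma nrmN1 : nrm (-1) = 1.
Proof.
have : nrm (-1) * nrm (-1) = 1 by rewrite -nrmM mulrNN mulr1 nrm1.
have := nrm_ge0 (-1); nra.
Qed.

Lemma nrmN x : nrm (- x) = nrm x.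
Proof. by rewrite -mulN1r nrmM nrmN1 mul1r. Qed.

Lemma nrmD_dominant x y : nrm y < nrm x -> nrm (x + y) = nrm x.
Proof.
move=> lt_yx; apply/eqP; rewrite eq_le; apply/andP; split.
  by apply: le_trans (nrmD_max x y) _; rewrite ge_max lexx ltW.
have := nrmD_max (x + y) (- y); rewrite nrmN addrK le_max => /orP [//|le_xy].
by move: (lt_le_trans lt_yx le_xy); rewrite ltxx.
Qed.

End NonArchimedeanAbsoluteValue.

Lemma fcub_subE (K : fieldType) (a x y : K) :
  fcub a x - fcub a y =
  (x - y) * (fcub' a y + ((3 * y + a) * (x - y) + (x - y) ^+ 2)).
Proof. by rewrite /fcub /fcub'; ring. Qed.

Theorem lemma4p1 (p : nat) (K : fieldType) (R : realType) (nrm : K -> R)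
  (hp : prime p) (hK : is_Qp p nrm) (a x0 x : K) :
  fcub a x0 = x0 ->
  Num.max (nrm (3 * x0 + a) * nrm (x - x0)) (nrm (x - x0) ^+ 2) < nrm (fcub' a x0) ->
  nrm (fcub a x - fcub a x0) = nrm (fcub' a x0) * nrm (x - x0).
Proof.
move: hK => [[nrm_ge0 nrm_eq0 nrmM nrmD_max _] _] _ small_corrections.
rewrite fcub_subE nrmM mulrC (nrmD_dominant nrm_ge0 nrm_eq0 nrmM nrmD_max) //.
apply: le_lt_trans (nrmD_max _ _) _.
by rewrite nrmM expr2 nrmM -expr2.
Qed.
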